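(* Let $n\ge2$, $\mathbb{K}$ any field, $A_n=\mathbb{K}[x,y]/(y^{2n+3},\, x^ny^2-y^{n+2},\, x^{2n+1}-xy^{n+1})$, and let $B_n$ be the set of monomials $x^iy^j$ not divisible by any of $y^{2n+3}, xy^{n+3}, x^ny^2, x^{2n+1}$. For every monomial $x^iy^j\in\mathbb{K}[x,y]$ exactly one of the following holds: (1) $x^iy^j=0$ in $A_n$; this happens if and only if $x^iy^j$ is divisible by one of $y^{2n+3}, xy^{n+3}, x^{n+1}y^3, x^{2n+1}y^2, x^{3n+1}$; (2) $x^iy^j\in B_n$; (3) $x^iy^j\notin B_n$ and there is a unique monomial $x^{i'}y^{j'}\in B_n$ with $x^iy^j=x^{i'}y^{j'}$ in $A_n$; moreover, $x^iy^j$ and $x^{i'}y^{j'}$ occur in the same one of the relations (1)–(7) listed below. The relations are: (1) $y^{n+2}=x^ny^2$; (2) $y^{n+k+2}=x^ny^{k+2}$ for $1\le k\le n-2$; (3) $y^{2n+1}=x^ny^{n+1}=x^{3n}$; (4) $y^{2n+2}=x^ny^{n+2}=x^{2n}y^2=x^{3n}y$; (5) $x^ky^{n+2}=x^{n+k}y^2=x^{2n+k}y$ for $1\le k\le n-1$; (6) $xy^{n+1}=x^{2n+1}$; (7) $x^ky^{n+1}=x^{2n+k}$ for $2\le k\le n-1$ (each displayed chain with a fixed $k$ counts as one relation).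
   Context: It is a fact (shown in the paper) that the images of the monomials in $B_n$ form a basis of $A_n$ and that relations (1)–(7) hold in $A_n$; each monomial appearing in (1)–(7) occurs in exactly one of these relations. *)

From HB Require Import structures.
From mathcomp Require Import all_boot all_order all_algebra.
From mathcomp Require Import mpoly.
Set Implicit Arguments. Unset Strict Implicit. Unset Printing Implicit Defensive.
Import GRing.Theory.
Local Open Scope ring_scope.

Section Defs.
Variable K : fieldType.

Definition idx0 : 'I_2 := Ordinal (isT : (0 < 2)%N).
Definition idx1 : 'I_2 := Ordinal (isT : (1 < 2)%N).

Definition xv : {mpoly K[2]} := 'X_idx0.
Definition yv : {mpoly K[2]} := 'X_idx1.

Definition mon (i j : nat) : {mpoly K[2]} := xv ^+ i * yv ^+ j.

Definition gen1 (n : nat) : {mpoly K[2]} := yv ^+ (2 * n + 3).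
Definition gen2 (n : nat) : {mpoly K[2]} := mon n 2 - yv ^+ (n + 2).
Definition gen3 (n : nat) : {mpoly K[2]} := xv ^+ (2 * n + 1) - mon 1 (n + 1).

Definition eqA (n : nat) (p q : {mpoly K[2]}) : Prop :=
  exists a b c : {mpoly K[2]}, p - q = a * gen1 n + b * gen2 n + c * gen3 n.
End Defs.

Definition mdiv (a b i j : nat) : bool := (a <= i)%N && (b <= j)%N.

Definition inB (n i j : nat) : bool :=
  ~~ [|| mdiv 0 (2 * n + 3) i j, mdiv 1 (n + 3) i j, mdiv n 2 i j
       | mdiv (2 * n + 1) 0 i j].

(* the list of relations (1)-(7), each given as the list of exponent pairs
   (i,j) of the monomials x^i y^j occurring in it *)
Definition relations (n : nat) : seq (seq (nat * nat)) :=
  [:: [:: (0, n + 2); (n, 2)]] ++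
  [seq [:: (0, n + k + 2); (n, k + 2)] | k <- iota 1 (n - 2)] ++
  [:: [:: (0, 2 * n + 1); (n, n + 1); (3 * n, 0)]] ++
  [:: [:: (0, 2 * n + 2); (n, n + 2); (2 * n, 2); (3 * n, 1)]] ++
  [seq [:: (k, n + 2); (n + k, 2); (2 * n + k, 1)] | k <- iota 1 (n - 1)] ++
  [:: [:: (1, n + 1); (2 * n + 1, 0)]] ++
  [seq [:: (k, n + 1); (2 * n + k, 0)] | k <- iota 2 (n - 2)].

Definition same_relation (n i j i' j' : nat) : Prop :=
  exists2 r, r \in relations n & ((i, j) \in r) && ((i', j') \in r).

Definition exactly_one (P Q R : Prop) : Prop :=
  [\/ P /\ ~ Q /\ ~ R, ~ P /\ Q /\ ~ R | ~ P /\ ~ Q /\ R].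

(* The map [normal_form] sends a monomial either to [None] (the monomial
   vanishes in A_n) or to the monomial of B_n it reduces to.  It is invariant
   under replacing m * lhs by m * rhs for each generator of the ideal and every
   monomial m, so for each b the functional "sum of the coefficients of the
   monomials with normal form b" kills the ideal.  Hence monomials with
   different normal forms differ in A_n, and a monomial with normal form b is
   not 0 in A_n.  Conversely every monomial is reduced to its normal form by
   the three defining relations. *)
From HB Require Import structures.
From mathcomp Require Import all_boot all_order all_algebra.
From mathcomp Require Import mpoly.
From mathcomp Require Import zify bigenough ssrcomplements ring.

Definition zero_mon (n i j : nat) : bool :=
  [|| mdiv 0 (2 * n + 3) i j, mdiv 1 (n + 3) i j, mdiv (n + 1) 3 i j,
         mdiv (2 * n + 1) 2 i j | mdiv (3 * n + 1) 0 i j].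

(* A monomial outside B_n that does not vanish is x^n y^j, x^i y^2, x^i y or
   x^i; it is sent to the member of B_n in its relation among (1)-(7). *)
Definition normal_form (n i j : nat) : option (nat * nat) :=
  if zero_mon n i j then None
  else if inB n i j then Some (i, j)
  else if i == n then Some (0, n + j)
  else if j == 2 then
    (if i == 2 * n then Some (0, 2 * n + 2) else Some (i - n, n + 2))
  else if j == 1 then
    (if i == 3 * n then Some (0, 2 * n + 2) else Some (i - 2 * n, n + 2))
  else (if i == 3 * n then Some (0, 2 * n + 1) else Some (i - 2 * n, n + 1)).

Ltac case_ifs := repeat (case: ifP => ?).
Ltac close_nat :=
  first [ done | (exfalso; lia) | (congr (Some (_, _)); lia) ].

Section NormalForm.
Variable n : nat.
Hypothesis n_ge2 : (2 <= n)%N.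

Lemma normal_form_gen1 i j : normal_form n i (j + (2 * n + 3)) = None.
Proof. rewrite /normal_form /zero_mon /mdiv; case_ifs; close_nat. Qed.

Lemma normal_form_gen2 i j :
  normal_form n (i + n) (j + 2) = normal_form n i (j + (n + 2)).
Proof. rewrite /normal_form /zero_mon /inB /mdiv; case_ifs; close_nat. Qed.

Lemma normal_form_gen3 i j :
  normal_form n (i + (2 * n + 1)) j = normal_form n (i + 1) (j + (n + 1)).
Proof. rewrite /normal_form /zero_mon /inB /mdiv; case_ifs; close_nat. Qed.

End NormalForm.

Lemma normal_form_eq_None n i j : normal_form n i j = None <-> zero_mon n i j.
Proof. by rewrite /normal_form; split; [case_ifs | move=> ->]. Qed.

Lemma zero_mon_notB {n i j} : zero_mon n i j -> ~~ inB n i j.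
Proof. by rewrite /inB /zero_mon /mdiv; lia. Qed.

Lemma normal_form_inB {n i j} : inB n i j -> normal_form n i j = Some (i, j).
Proof.
move=> ijB; rewrite /normal_form ijB.
by case: ifP => // /zero_mon_notB; rewrite ijB.
Qed.

Lemma inB_normal_form {n i j a b} : (2 <= n)%N ->
  normal_form n i j = Some (a, b) -> inB n a b.
Proof.
move=> n_ge2; rewrite /normal_form /inB /zero_mon /mdiv.
by case_ifs => // -[<- <-]; lia.
Qed.

Section Relations.
Context {n : nat}.

Lemma same_relationP r i j a b : r \in relations n ->
  (i, j) \in r -> (a, b) \in r -> same_relation n i j a b.
Proof. by move=> rn ijr abr; exists r => //; rewrite ijr abr. Qed.

Lemma mem_relation1 : [:: (0, n + 2); (n, 2)] \in relations n.
Proof. by rewrite /relations !mem_cat !inE eqxx. Qed.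

Lemma mem_relation2 k : (1 <= k <= n - 2)%N ->
  [:: (0, n + k + 2); (n, k + 2)] \in relations n.
Proof.
move=> k_range; rewrite /relations !mem_cat; apply/orP; right; apply/orP; left.
by apply/mapP; exists k; rewrite ?mem_iota //; lia.
Qed.

Lemma mem_relation3 : [:: (0, 2 * n + 1); (n, n + 1); (3 * n, 0)] \in relations n.
Proof. by rewrite /relations !mem_cat !inE eqxx !orbT. Qed.

Lemma mem_relation4 :
  [:: (0, 2 * n + 2); (n, n + 2); (2 * n, 2); (3 * n, 1)] \in relations n.
Proof. by rewrite /relations !mem_cat !inE eqxx !orbT. Qed.

Lemma mem_relation5 k : (1 <= k <= n - 1)%N ->
  [:: (k, n + 2); (n + k, 2); (2 * n + k, 1)] \in relations n.
Proof.
move=> k_range; rewrite /relations !mem_cat.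
do 4 (apply/orP; right); apply/orP; left.
by apply/mapP; exists k; rewrite ?mem_iota //; lia.
Qed.

Lemma mem_relation6 : [:: (1, n + 1); (2 * n + 1, 0)] \in relations n.
Proof. by rewrite /relations !mem_cat !inE eqxx !orbT. Qed.

Lemma mem_relation7 k : (2 <= k <= n - 1)%N ->
  [:: (k, n + 1); (2 * n + k, 0)] \in relations n.
Proof.
move=> k_range; rewrite /relations !mem_cat; do 6 (apply/orP; right).
by apply/mapP; exists k; rewrite ?mem_iota //; lia.
Qed.

Ltac mem_pairs := by rewrite !inE !xpair_eqE; lia.

Lemma same_relation_xn j : (2 <= n)%N -> (2 <= j <= n + 2)%N ->
  same_relation n n j 0 (n + j).
Proof.
move=> n_ge2 j_range.
have [->|j_ne2] := eqVneq j 2.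
  by apply: same_relationP mem_relation1 _ _; mem_pairs.
have [->|j_ne] := eqVneq j (n + 1).
  by apply: same_relationP mem_relation3 _ _; mem_pairs.
have [->|j_ne'] := eqVneq j (n + 2).
  by apply: same_relationP mem_relation4 _ _; mem_pairs.
by apply: same_relationP (@mem_relation2 (j - 2) _) _ _; [lia | mem_pairs..].
Qed.

Lemma same_relation_y2 i : (n < i < 2 * n)%N ->
  same_relation n i 2 (i - n) (n + 2).
Proof.
by move=> i_range; apply: same_relationP (@mem_relation5 (i - n) _) _ _;
  [lia | mem_pairs..].
Qed.

Lemma same_relation_y1 i : (2 * n < i < 3 * n)%N ->
  same_relation n i 1 (i - 2 * n) (n + 2).
Proof.
by move=> i_range; apply: same_relationP (@mem_relation5 (i - 2 * n) _) _ _;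
  [lia | mem_pairs..].
Qed.

Lemma same_relation_y0 i : (2 <= n)%N -> (2 * n < i < 3 * n)%N ->
  same_relation n i 0 (i - 2 * n) (n + 1).
Proof.
move=> n_ge2 i_range.
have [->|i_ne] := eqVneq i (2 * n + 1).
  by apply: same_relationP mem_relation6 _ _; mem_pairs.
by apply: same_relationP (@mem_relation7 (i - 2 * n) _) _ _; [lia | mem_pairs..].
Qed.

Lemma normal_form_same_relation {i j} : (2 <= n)%N ->
  ~~ zero_mon n i j -> ~~ inB n i j ->
  exists a b, normal_form n i j = Some (a, b) /\ same_relation n i j a b.
Proof.
move=> n_ge2 nz nB; rewrite /normal_form (negbTE nz) (negbTE nB).
move: nz nB; rewrite /zero_mon /inB /mdiv => nz nB.
case: ifP => [/eqP ein|i_ne].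
  by subst i; do 2 eexists; split; [reflexivity | apply: same_relation_xn; lia].
case: ifP => [/eqP j2|j_ne2]; last case: ifP => [/eqP j1|j_ne1];
  [idtac.. | have j0 : j = 0%N by lia]; subst j;
  case: ifP => [/eqP ei|i_ne']; do 2 eexists; split; try reflexivity;
  try subst i.
- by apply: same_relationP mem_relation4 _ _; mem_pairs.
- by apply: same_relation_y2; lia.
- by apply: same_relationP mem_relation4 _ _; mem_pairs.
- by apply: same_relation_y1; lia.
- by apply: same_relationP mem_relation3 _ _; mem_pairs.
- by apply: same_relation_y0; lia.
Qed.

End Relations.

Import GRing.Theory BigEnough.
Local Open Scope ring_scope.

Section CoefficientFunctional.
Variables (K : fieldType) (k : nat) (w : 'X_{1..k} -> K).
Implicit Types p q : {mpoly K[k]}.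

Definition mweight p : K := \sum_(m <- msupp p) p@_m * w m.

Lemma mweightE p d : (msize p <= d)%N ->
  mweight p = \sum_(m : 'X_{1..k < d}) p@_m * w m.
Proof.
move=> size_p; rewrite /mweight (big_mksub 'X_{1..k < d}) ?msupp_uniq //=.
  by rewrite big_rmcond //= => m /memN_msupp_eq0 ->; rewrite mul0r.
by move=> m /msize_mdeg_lt /leq_trans; apply.
Qed.

Lemma mweight0 : mweight 0 = 0.
Proof. by rewrite /mweight msupp0 big_nil. Qed.

Lemma mweightX m : mweight 'X_[m] = w m.
Proof. by rewrite /mweight msuppX big_seq1 mcoeffX eqxx mul1r. Qed.

Lemma mweightD p q : mweight (p + q) = mweight p + mweight q.
Proof.
pose_big_enough d.
  rewrite !(mweightE _ d) // -big_split; apply: eq_bigr => m _.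
  by rewrite mcoeffD mulrDl.
by close.
Qed.

Lemma mweightB p q : mweight (p - q) = mweight p - mweight q.
Proof.
pose_big_enough d.
  rewrite !(mweightE _ d) // -sumrB; apply: eq_bigr => m _.
  by rewrite mcoeffB mulrBl.
by close.
Qed.

Lemma mweightZ c p : mweight (c *: p) = c * mweight p.
Proof.
pose_big_enough d.
  rewrite !(mweightE _ d) // mulr_sumr; apply: eq_bigr => m _.
  by rewrite mcoeffZ mulrA.
by close.
Qed.

Lemma mweight_ideal g : (forall m, mweight ('X_[m] * g) = 0) ->
  forall a, mweight (a * g) = 0.
Proof.
move=> wXg a; rewrite (mpolyE a) mulr_suml.
elim: (msupp a) => [|m s IHs]; first by rewrite big_nil mweight0.
by rewrite big_cons mweightD IHs -scalerAl mweightZ wXg mulr0 addr0.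
Qed.

End CoefficientFunctional.

Arguments mweight {K k} w p.

Section Monomials.
Variable K : fieldType.

Definition mexp (i j : nat) : 'X_{1..2} := (U_(idx0) *+ i + U_(idx1) *+ j)%MM.

Lemma mexp0 i j : mexp i j idx0 = i.
Proof. by rewrite /mexp mnmDE !mulmnE !mnm1E /=; lia. Qed.

Lemma mexp1 i j : mexp i j idx1 = j.
Proof. by rewrite /mexp mnmDE !mulmnE !mnm1E /=; lia. Qed.

Lemma mexpE (m : 'X_{1..2}) : m = mexp (m idx0) (m idx1).
Proof.
apply/mnmP => l; rewrite /mexp mnmDE !mulmnE !mnm1E.
case: l => [[|[|l]] lt_l2] //=; rewrite !mul1n !mul0n ?addn0 ?add0n;
  by congr (m _); apply: val_inj.
Qed.

Lemma monE i j : mon K i j = 'X_[mexp i j].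
Proof. by rewrite /mon /xv /yv /mexp mpolyXD !mpolyXn. Qed.

Lemma monM i j a b : mon K i j * mon K a b = mon K (i + a) (j + b).
Proof.
rewrite !monE -mpolyXD; congr 'X_[_]; apply/mnmP => l.
by rewrite /mexp !mnmDE !mulmnE; lia.
Qed.

Lemma gen1E n : gen1 K n = mon K 0 (2 * n + 3).
Proof. by rewrite /gen1 /mon expr0 mul1r. Qed.

Lemma gen2E n : gen2 K n = mon K n 2 - mon K 0 (n + 2).
Proof. by rewrite /gen2 /mon expr0 mul1r. Qed.

Lemma gen3E n : gen3 K n = mon K (2 * n + 1) 0 - mon K 1 (n + 1).
Proof. by rewrite /gen3 /mon expr0 mulr1. Qed.

End Monomials.

Section Invariance.
Context {K : fieldType} {n : nat}.
Hypothesis n_ge2 : (2 <= n)%N.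

Definition normal_form_indicator b (m : 'X_{1..2}) : K :=
  (normal_form n (m idx0) (m idx1) == Some b)%:R.

Local Notation weight b := (mweight (normal_form_indicator b)).

Lemma weight_mon b i j : weight b (mon K i j) = (normal_form n i j == Some b)%:R.
Proof. by rewrite monE mweightX /normal_form_indicator mexp0 mexp1. Qed.

Lemma weight_eqA b p q : eqA n p q -> weight b p = weight b q.
Proof.
case=> [a [c [d pq]]]; apply/eqP; rewrite -subr_eq0 -mweightB pq !mweightD.
rewrite !mweight_ideal ?addr0 // => m; rewrite (mexpE m) -monE.
- by rewrite gen3E mulrBr !monM mweightB !weight_mon addn0 normal_form_gen3 // subrr.
- by rewrite gen2E mulrBr !monM mweightB !weight_mon addn0 normal_form_gen2 // subrr.
- by rewrite gen1E monM weight_mon addn0 normal_form_gen1.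
Qed.

Lemma eqA0_normal_form {i j} : eqA n (mon K i j) 0 -> normal_form n i j = None.
Proof.
case nf_ij: (normal_form n i j) => [b|] // ij0.
by have /eqP := weight_eqA b _ _ ij0; rewrite weight_mon mweight0 nf_ij eqxx oner_eq0.
Qed.

Lemma eqA_normal_form {i j a c} :
  eqA n (mon K i j) (mon K a c) -> normal_form n i j = normal_form n a c.
Proof.
move=> ij_ac; have weq b : (normal_form n i j == Some b)%:R =
                             (normal_form n a c == Some b)%:R :> K.
  by rewrite -!weight_mon; apply: weight_eqA.
case nf_ij: (normal_form n i j) => [b|]; case nf_ac: (normal_form n a c) => [b'|] //.
- by have := weq b; rewrite nf_ij nf_ac eqxx; case: eqP => [->|_ /eqP]; rewrite ?oner_eq0.
- by have /eqP := weq b; rewrite nf_ij nf_ac eqxx oner_eq0.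
- by have /eqP := weq b'; rewrite nf_ij nf_ac eqxx eq_sym oner_eq0.
Qed.

End Invariance.

Section Reduction.
Context {K : fieldType} {n : nat}.
Hypothesis n_ge2 : (2 <= n)%N.

Implicit Types p q r : {mpoly K[2]}.

Local Notation eqM i j a c := (eqA n (mon K i j) (mon K a c)).
Local Notation zeroM i j := (eqA n (mon K i j) 0).

Lemma eqA_refl p : eqA n p p.
Proof. by exists 0, 0, 0; rewrite subrr !mul0r !addr0. Qed.

Lemma eqA_sym {p q} : eqA n p q -> eqA n q p.
Proof.
case=> a [b [c pq]]; exists (- a), (- b), (- c).
by rewrite -opprB pq !mulNr !opprD.
Qed.

Lemma eqA_trans {p q r} : eqA n p q -> eqA n q r -> eqA n p r.
Proof.
case=> a [b [c pq]] [a' [b' [c' qr]]]; exists (a + a'), (b + b'), (c + c').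
by rewrite -[p - r](subrKA q) pq qr; ring.
Qed.

Lemma eqA_mull r p q : eqA n p q -> eqA n (r * p) (r * q).
Proof.
case=> a [b [c pq]]; exists (r * a), (r * b), (r * c).
by rewrite -mulrBr pq !mulrDr !mulrA.
Qed.

Lemma eqA_monW {i j a c I J A C} : eqM i j a c -> (i <= I)%N -> (j <= J)%N ->
  A = (I - i + a)%N -> C = (J - j + c)%N -> eqM I J A C.
Proof.
move=> /(eqA_mull (mon K (I - i) (J - j))) + le_iI le_jJ -> ->.
by rewrite !monM !subnK.
Qed.

Lemma eqA0_mon_dvd {i j I J} : zeroM i j -> (i <= I)%N -> (j <= J)%N -> zeroM I J.
Proof.
move=> /(eqA_mull (mon K (I - i) (J - j))) + le_iI le_jJ.
by rewrite mulr0 monM !subnK.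
Qed.

Lemma eqA_gen1 : zeroM 0 (2 * n + 3).
Proof. by exists 1, 0, 0; rewrite subr0 -gen1E !mul0r mul1r !addr0. Qed.

Lemma eqA_gen2 : eqM n 2 0 (n + 2).
Proof. by exists 0, 1, 0; rewrite -gen2E !mul0r mul1r addr0 add0r. Qed.

Lemma eqA_gen3 : eqM (2 * n + 1) 0 1 (n + 1).
Proof. by exists 0, 0, 1; rewrite -gen3E !mul0r mul1r !add0r. Qed.

(* x y^(n+3) = x^(2n+1) y^2 = x^(n+1) y^(n+2) = x y^(2n+2); multiplying by
   y^(n-1) gives x y^(2n+2) = x y^(3n+1), a multiple of y^(2n+3). *)
Lemma eqA0_x_yn3 : zeroM 1 (n + 3).
Proof.
have to_y2n2 : eqM 1 (n + 3) 1 (2 * n + 2).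
  apply: eqA_trans (_ : eqM 1 (n + 3) (2 * n + 1) 2) _.
    by apply: eqA_sym; apply: (eqA_monW eqA_gen3); lia.
  apply: eqA_trans (_ : eqM _ _ (n + 1) (n + 2)) _; by apply: (eqA_monW eqA_gen2); lia.
have to_y3n1 : eqM 1 (2 * n + 2) 1 (3 * n + 1) by apply: (eqA_monW to_y2n2); lia.
apply: eqA_trans to_y2n2 (eqA_trans to_y3n1 _).
by apply: (eqA0_mon_dvd eqA_gen1); lia.
Qed.

Lemma eqA0_xn1_y3 : zeroM (n + 1) 3.
Proof. by apply: eqA_trans eqA0_x_yn3; apply: (eqA_monW eqA_gen2); lia. Qed.

Lemma eqA0_x2n1_y2 : zeroM (2 * n + 1) 2.
Proof. by apply: eqA_trans eqA0_x_yn3; apply: (eqA_monW eqA_gen3); lia. Qed.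

Lemma eqA0_x3n1 : zeroM (3 * n + 1) 0.
Proof.
apply: eqA_trans (_ : eqM _ _ (n + 1) (n + 1)) _; first by apply: (eqA_monW eqA_gen3); lia.
by apply: (eqA0_mon_dvd eqA0_xn1_y3); lia.
Qed.

Lemma zero_mon_eqA0 {i j} : zero_mon n i j -> zeroM i j.
Proof.
rewrite /zero_mon /mdiv.
case/orP => [|/orP[|/orP[|/orP[]]]] /andP[le_i le_j].
- exact: eqA0_mon_dvd eqA_gen1 le_i le_j.
- exact: eqA0_mon_dvd eqA0_x_yn3 le_i le_j.
- exact: eqA0_mon_dvd eqA0_xn1_y3 le_i le_j.
- exact: eqA0_mon_dvd eqA0_x2n1_y2 le_i le_j.
- exact: eqA0_mon_dvd eqA0_x3n1 le_i le_j.
Qed.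

Lemma eqA_to_normal_form {i j a c} :
  normal_form n i j = Some (a, c) -> eqM i j a c.
Proof.
rewrite /normal_form /zero_mon /inB /mdiv; case_ifs => // -[<- <-];
  first [ exact: eqA_refl
        | by apply: (eqA_monW eqA_gen2); lia
        | by apply: (eqA_monW eqA_gen3); lia
        | by apply: eqA_trans (_ : eqM _ _ n (n + 2)) _;
             apply: (eqA_monW eqA_gen2); lia
        | by apply: eqA_trans (_ : eqM _ _ n (n + 2)) _;
             [apply: (eqA_monW eqA_gen3) | apply: (eqA_monW eqA_gen2)]; lia
        | by apply: eqA_trans (_ : eqM _ _ n (n + 1)) _;
             [apply: (eqA_monW eqA_gen3) | apply: (eqA_monW eqA_gen2)]; lia ].
Qed.

End Reduction.

Theorem corollary2p5 (K : fieldType) (n : nat) (hn : (2 <= n)%N) (i j : nat) :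
  exactly_one
    (eqA n (mon K i j) 0)
    (inB n i j)
    (~~ inB n i j /\
     exists i' j' : nat,
       [/\ inB n i' j', eqA n (mon K i j) (mon K i' j'),
           (forall i'' j'' : nat, inB n i'' j'' ->
              eqA n (mon K i j) (mon K i'' j'') -> i'' = i' /\ j'' = j')
         & same_relation n i j i' j'])
  /\
  (eqA n (mon K i j) 0 <->
     [|| mdiv 0 (2 * n + 3) i j, mdiv 1 (n + 3) i j, mdiv (n + 1) 3 i j,
         mdiv (2 * n + 1) 2 i j | mdiv (3 * n + 1) 0 i j]).
Proof.
have zeroP : eqA n (mon K i j) 0 <-> zero_mon n i j.
  split; first by move/(eqA0_normal_form hn)/normal_form_eq_None.
  exact: zero_mon_eqA0.
split; last exact: zeroP.
have [ij0|nz] := boolP (zero_mon n i j).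
  apply: Or31; split; first exact/zeroP.
  split; first exact/negP/zero_mon_notB.
  case=> _ [a [c [acB ij_ac _ _]]].
  move: (eqA_normal_form hn ij_ac) (normal_form_inB acB).
  by rewrite (normal_form_eq_None n i j).2 // => <-.
have [ijB|nB] := boolP (inB n i j).
  by apply: Or32; split; [move/zeroP; apply/negP | split => // -[]].
apply: Or33; split; first by move/zeroP; apply/negP.
have [a [c [nf_ij same_rel]]] := normal_form_same_relation hn nz nB.
split; first exact/negP.
split=> //; exists a, c; split => //.
- exact: inB_normal_form hn nf_ij.
- exact: (eqA_to_normal_form hn nf_ij).
- move=> a' c' acB' /(eqA_normal_form hn).
  by rewrite nf_ij (normal_form_inB acB') => -[-> ->].
Qed.
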